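(* Let $X\in\mathbb{R}^{n\times m}$ ($m\ge n$) be a full rank matrix, and let $\mathcal S\subseteq[m]$ be any subset of cardinality $k$ ($n\le k\le m$) such that $X_{\mathcal S}$ is full rank. For $i=1,\dots,n$, let $Y_i\in\mathbb{R}^{(n-1)\times m}$ be the matrix obtained from $X$ by removing its $i$-th row. Then $$\|X_{\mathcal S}^{\dagger}\|_F^2=\frac{\sum_{i=1}^n\det\big((Y_i)_{\mathcal S}(Y_i)_{\mathcal S}^T\big)}{\det\big(X_{\mathcal S}X_{\mathcal S}^T\big)}.$$ Moreover, writing $X=[x_1,\dots,x_m]$ in columns, if $\mathcal S$ has cardinality exactly $n$ then $$\|X_{\mathcal S}^{-1}\|_F^2\le \|X^{\dagger}\|_2^2\cdot\frac{\sum_{j=1}^m\sum_{i=1}^n\det\big(X_{\mathcal S}(i\to x_j)\big)^2}{\det(X_{\mathcal S})^2},$$ and if $X$ has orthonormal rows this inequality is an equality.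
   Context: $[m]=\{1,\dots,m\}$; for $\mathcal S\subseteq[m]$, $X_{\mathcal S}$ (resp. $(Y_i)_{\mathcal S}$) is the submatrix of columns indexed by $\mathcal S$, in increasing order. $A^\dagger$ is the Moore–Penrose pseudo-inverse; $\|\cdot\|_2,\|\cdot\|_F$ spectral and Frobenius norms. For a square matrix $A$, index $i$ and vector $v$, $A(i\to v)$ denotes the matrix obtained by replacing the $i$-th column of $A$ by $v$. *)

From HB Require Import structures.
From mathcomp Require Import all_boot all_order all_algebra.
From mathcomp Require Import classical_sets reals.
From Stdlib Require Import ClassicalEpsilon.
Set Implicit Arguments. Unset Strict Implicit. Unset Printing Implicit Defensive.
Import Order.TTheory GRing.Theory Num.Theory.
Local Open Scope ring_scope.
Local Open Scope classical_set_scope.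

Section Defs.
Variable R : realType.

Definition penrose (p q : nat) (A : 'M[R]_(p, q)) (B : 'M[R]_(q, p)) : Prop :=
  [/\ A *m B *m A = A, B *m A *m B = B,
      (A *m B)^T = A *m B & (B *m A)^T = B *m A].

(* The Moore-Penrose pseudo-inverse (it exists and is unique for real matrices). *)
Definition pinv (p q : nat) (A : 'M[R]_(p, q)) : 'M[R]_(q, p) :=
  epsilon (inhabits 0) (penrose A).

Definition frob_norm (p q : nat) (A : 'M[R]_(p, q)) : R :=
  Num.sqrt (\sum_(i < p) \sum_(j < q) A i j ^+ 2).

Definition vnorm (q : nat) (v : 'cV[R]_q) : R :=
  Num.sqrt (\sum_(i < q) v i 0 ^+ 2).

Definition spec_norm (p q : nat) (A : 'M[R]_(p, q)) : R :=
  sup [set vnorm (A *m v) | v in [set v : 'cV[R]_q | vnorm v = 1]].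

(* Submatrix of the columns indexed by (the increasing enumeration) f. *)
Definition colsel (p q k : nat) (f : 'I_k -> 'I_q) (A : 'M[R]_(p, q)) : 'M[R]_(p, k) :=
  \matrix_(i < p, j < k) A i (f j).

Definition repl_col (p : nat) (A : 'M[R]_p) (i : 'I_p) (v : 'cV[R]_p) : 'M[R]_p :=
  \matrix_(r < p, c < p) (if c == i then v r 0 else A r c).

End Defs.

(* For a row-free A the pseudo-inverse is A^T (A A^T)^-1, so ||A^+||_F^2 is the
   trace of (A A^T)^-1: the sum of the principal cofactors of A A^T divided by
   its determinant, and the i-th principal minor of A A^T is the Gram matrix of
   row' i A.

   For the inequality, Cramer's rule identifies det(A(i -> x_j)) / det A with
   the entry (A^-1 X)_ij, so the right-hand side is ||X^+||_2^2 ||A^-1 X||_F^2.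
   Since X X^+ = 1, every vector u satisfies |u|^2 = <X^+ u, X^T u>, whence
   |u| <= ||X^+||_2 |X^T u| by Cauchy-Schwarz; apply this to each row of A^-1.
   When X has orthonormal rows, X^+ = X^T is an isometry and equality holds. *)

From HB Require Import structures.
From mathcomp Require Import all_boot all_order all_algebra.
From mathcomp Require Import classical_sets reals.
From mathcomp Require Import ring.
From Stdlib Require Import ClassicalEpsilon.
Set Implicit Arguments. Unset Strict Implicit. Unset Printing Implicit Defensive.
Import Order.TTheory GRing.Theory Num.Theory.
Local Open Scope ring_scope.

Section RealMatrices.
Variable R : realType.

Lemma rV_mul_tr_eq0 q (u : 'rV[R]_q) : u *m u^T = 0 -> u = 0.
Proof.
move=> /(congr1 (fun M : 'M_1 => M 0 0)); rewrite !mxE => uu0.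
have sum_sqr0 : \sum_i u 0 i ^+ 2 = 0.
  by rewrite -[RHS]uu0; apply: eq_bigr => i _; rewrite mxE expr2.
apply/matrixP => i j; rewrite (ord1 i) mxE; apply/eqP; rewrite -sqrf_eq0.
by apply/eqP/(psumr_eq0P (fun i _ => sqr_ge0 (u 0 i)) sum_sqr0).
Qed.

Lemma row_free_mul_tr_unit p q (A : 'M[R]_(p, q)) :
  row_free A -> A *m A^T \in unitmx.
Proof.
move=> fA; rewrite -row_free_unit -kermx_eq0; apply/rowV0P => v /sub_kermxP vAAt.
have : v *m A = 0.
  by apply: rV_mul_tr_eq0; rewrite trmx_mul mulmxA -(mulmxA v) vAAt mul0mx.
by move/eqP; rewrite mulmx_free_eq0 // => /eqP.
Qed.

Section RowFree.
Variables (p q : nat) (A : 'M[R]_(p, q)).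
Hypothesis fA : row_free A.

Lemma penrose_row_freeE B : penrose A B -> B = A^T *m invmx (A *m A^T).
Proof.
case=> ABA BAB _ BAT; have U := row_free_mul_tr_unit fA.
have AB1 : A *m B = 1%:M.
  by rewrite -[A *m B](mulmxK U) mulmxA ABA mulmxV.
have BE : B = A^T *m (B^T *m B) by rewrite mulmxA -trmx_mul BAT BAB.
have BtB : B^T *m B = invmx (A *m A^T).
  by rewrite -[B^T *m B](mulKmx U) -mulmxA -BE AB1 mulmx1.
by rewrite {1}BE BtB.
Qed.

Lemma pinv_row_free : pinv A = A^T *m invmx (A *m A^T).
Proof.
apply: penrose_row_freeE; rewrite /pinv; apply: epsilon_spec.
have U := row_free_mul_tr_unit fA.
have AB1 : A *m (A^T *m invmx (A *m A^T)) = 1%:M by rewrite mulmxA mulmxV.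
exists (A^T *m invmx (A *m A^T)); split.
- by rewrite AB1 mul1mx.
- by rewrite -mulmxA AB1 mulmx1.
- by rewrite AB1 trmx1.
- by rewrite !trmx_mul trmx_inv trmx_mul !trmxK mulmxA.
Qed.

Lemma mulmx_pinv : A *m pinv A = 1%:M.
Proof. by rewrite pinv_row_free mulmxA mulmxV ?row_free_mul_tr_unit. Qed.

Lemma pinv_tr_mul : (pinv A)^T *m pinv A = invmx (A *m A^T).
Proof.
rewrite pinv_row_free trmx_mul trmx_inv trmx_mul trmxK -mulmxA (mulmxA A).
by rewrite mulmxV ?row_free_mul_tr_unit // mulmx1.
Qed.

End RowFree.

Lemma frob_norm_sqr p q (A : 'M[R]_(p, q)) :
  frob_norm A ^+ 2 = \sum_i \sum_j A i j ^+ 2.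
Proof.
rewrite /frob_norm sqr_sqrtr //.
by do 2!apply: sumr_ge0 => ? _; exact: sqr_ge0.
Qed.

Lemma sum_sqr_mx_tr p q (A : 'M[R]_(p, q)) :
  \sum_i \sum_j A i j ^+ 2 = \tr (A^T *m A).
Proof.
rewrite exchange_big; apply: eq_bigr => j _; rewrite mxE.
by apply: eq_bigr => i _; rewrite mxE expr2.
Qed.

Lemma mxtrace_invmx n (M : 'M[R]_n) : M \in unitmx ->
  \tr (invmx M) = (\sum_i \det (row' i (col' i M))) / \det M.
Proof.
move=> U; rewrite /invmx U mxtraceZ mulrC; congr (_ * _).
apply: eq_bigr => i _; rewrite mxE /cofactor.
by rewrite -signr_odd addnn odd_double mul1r.
Qed.

Lemma row'_col'_mul_tr p q (A : 'M[R]_(p, q)) i :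
  row' i (col' i (A *m A^T)) = row' i A *m (row' i A)^T.
Proof. by apply/matrixP => r c; rewrite !mxE; apply: eq_bigr => k _; rewrite !mxE. Qed.

Lemma frob_norm_pinv p q (A : 'M[R]_(p, q)) : row_free A ->
  frob_norm (pinv A) ^+ 2 =
  (\sum_i \det (row' i A *m (row' i A)^T)) / \det (A *m A^T).
Proof.
move=> fA; rewrite frob_norm_sqr sum_sqr_mx_tr pinv_tr_mul //.
rewrite mxtrace_invmx ?row_free_mul_tr_unit //.
by under eq_bigr => i _ do rewrite row'_col'_mul_tr.
Qed.

Lemma sum_mul_sqr_le q (a b : 'I_q -> R) :
  (\sum_i a i * b i) ^+ 2 <= (\sum_i a i ^+ 2) * (\sum_i b i ^+ 2).
Proof.
set A := \sum_i a i ^+ 2; set B := \sum_i b i ^+ 2; set C := \sum_i a i * b i.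
have A0 : 0 <= A by apply: sumr_ge0 => i _; exact: sqr_ge0.
have [A_eq0 | A_neq0] := eqVneq A 0.
  have a0 i : a i = 0.
    apply/eqP; rewrite -sqrf_eq0; apply/eqP.
    exact: (psumr_eq0P (fun i _ => sqr_ge0 (a i)) A_eq0).
  by rewrite /C big1 => [|i _]; rewrite ?A_eq0 ?a0 ?expr0n ?mul0r.
have Apos : 0 < A by rewrite lt_def A_neq0.
(* [t = C / A] minimises the nonnegative quadratic [\sum_i (t a_i - b_i)^2]. *)
have : 0 <= \sum_i (C / A * a i - b i) ^+ 2 by apply: sumr_ge0 => i _; exact: sqr_ge0.
have -> : \sum_i (C / A * a i - b i) ^+ 2 = B - C ^+ 2 / A.
  have -> : B - C ^+ 2 / A = (C / A) ^+ 2 * A - 2 * (C / A) * C + B by field.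
  rewrite /A /B /C !mulr_sumr -sumrN -!big_split /=.
  by apply: eq_bigr => i _; ring.
by rewrite subr_ge0 ler_pdivrMr // mulrC.
Qed.

Definition sqnorm q (v : 'cV[R]_q) : R := \sum_i v i 0 ^+ 2.

Lemma sqnorm_ge0 q (v : 'cV[R]_q) : 0 <= sqnorm v.
Proof. by apply: sumr_ge0 => i _; exact: sqr_ge0. Qed.

Lemma vnorm_sqr q (v : 'cV[R]_q) : vnorm v ^+ 2 = sqnorm v.
Proof. by rewrite sqr_sqrtr // sqnorm_ge0. Qed.

Lemma sqnorm_eq0 q (v : 'cV[R]_q) : sqnorm v = 0 -> v = 0.
Proof.
move=> v0; apply/matrixP => i j; rewrite (ord1 j) mxE; apply/eqP.
by rewrite -sqrf_eq0; apply/eqP/(psumr_eq0P (fun i _ => sqr_ge0 (v i 0)) v0).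
Qed.

Lemma sqnormZ q c (v : 'cV[R]_q) : sqnorm (c *: v) = c ^+ 2 * sqnorm v.
Proof. by rewrite /sqnorm mulr_sumr; apply: eq_bigr => i _; rewrite mxE exprMn. Qed.

Lemma sqnorm_tr_mul q (v : 'cV[R]_q) : sqnorm v = (v^T *m v) 0 0.
Proof. by rewrite mxE; apply: eq_bigr => i _; rewrite mxE expr2. Qed.

Lemma sqnorm_row p q (M : 'M[R]_(p, q)) i : sqnorm (row i M)^T = \sum_j M i j ^+ 2.
Proof. by apply: eq_bigr => j _; rewrite !mxE. Qed.

Lemma sqnorm_mul_le p q (P : 'M[R]_(p, q)) v :
  sqnorm (P *m v) <= (\sum_i \sum_j P i j ^+ 2) * sqnorm v.
Proof.
rewrite /sqnorm mulr_suml; apply: ler_sum => i _; rewrite mxE.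
exact: (sum_mul_sqr_le (fun j => P i j) (fun j => v j 0)).
Qed.

Lemma vnorm_mul_le_spec_norm p q (P : 'M[R]_(p, q)) v :
  vnorm v = 1 -> vnorm (P *m v) <= spec_norm P.
Proof.
move=> v1; apply: ub_le_sup; last by exists v.
exists (Num.sqrt (\sum_i \sum_j P i j ^+ 2)) => _ [w /= w1 <-].
apply: ler_wsqrtr; have := sqnorm_mul_le P w.
by rewrite -(vnorm_sqr w) w1 expr1n mulr1.
Qed.

Lemma sqnorm_mul_le_spec_norm p q (P : 'M[R]_(p, q)) v :
  sqnorm (P *m v) <= spec_norm P ^+ 2 * sqnorm v.
Proof.
have [v_eq0 | v_neq0] := eqVneq (sqnorm v) 0.
  rewrite v_eq0 (sqnorm_eq0 v_eq0) mulmx0 mulr0 /sqnorm big1 // => i _.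
  by rewrite mxE expr0n.
have vpos : 0 < sqnorm v by rewrite lt_def v_neq0 sqnorm_ge0.
have u1 : vnorm ((vnorm v)^-1 *: v) = 1.
  by rewrite /vnorm -/(sqnorm _) sqnormZ exprVn vnorm_sqr mulVf ?sqrtr1.
have Pu_le := vnorm_mul_le_spec_norm P u1.
have : sqnorm (P *m ((vnorm v)^-1 *: v)) <= spec_norm P ^+ 2.
  by rewrite -vnorm_sqr ler_sqr // ?nnegrE ?sqrtr_ge0 // (le_trans _ Pu_le) ?sqrtr_ge0.
by rewrite -scalemxAr sqnormZ exprVn vnorm_sqr mulrC ler_pdivrMr.
Qed.

Lemma sqnorm_le_spec_norm_right_inverse n m (X : 'M[R]_(n, m)) P :
  X *m P = 1%:M -> forall u, sqnorm u <= spec_norm P ^+ 2 * sqnorm (X^T *m u).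
Proof.
move=> XP u; set w := X^T *m u.
have [u_eq0 | u_neq0] := eqVneq (sqnorm u) 0.
  by rewrite u_eq0 mulr_ge0 ?sqr_ge0 ?sqnorm_ge0.
have upos : 0 < sqnorm u by rewrite lt_def u_neq0 sqnorm_ge0.
have uPw : sqnorm u = \sum_j (P *m u) j 0 * w j 0.
  have uE : u = P^T *m w by rewrite /w mulmxA -trmx_mul XP trmx1 mul1mx.
  rewrite sqnorm_tr_mul {2}uE mulmxA -trmx_mul mxE.
  by apply: eq_bigr => j _; rewrite mxE.
have := sum_mul_sqr_le (fun j => (P *m u) j 0) (fun j => w j 0).
rewrite -uPw -/(sqnorm (P *m u)) -/(sqnorm w) => cs.
have : sqnorm u ^+ 2 <= spec_norm P ^+ 2 * sqnorm u * sqnorm w.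
  by rewrite (le_trans cs) // ler_wpM2r ?sqnorm_ge0 ?sqnorm_mul_le_spec_norm.
by rewrite expr2 mulrAC ler_pM2r.
Qed.

Lemma sum_sqr_le_spec_norm_right_inverse n m (X : 'M[R]_(n, m)) P (B : 'M[R]_n) :
  X *m P = 1%:M ->
  \sum_i \sum_j B i j ^+ 2 <= spec_norm P ^+ 2 * \sum_i \sum_j (B *m X) i j ^+ 2.
Proof.
move=> XP; rewrite mulr_sumr; apply: ler_sum => i _.
have := sqnorm_le_spec_norm_right_inverse XP (row i B)^T.
by rewrite -trmx_mul -row_mul !sqnorm_row.
Qed.

Local Open Scope classical_set_scope.

Lemma spec_norm_isometry p q (A : 'M[R]_(p, q.+1)) :
  (forall v, sqnorm (A *m v) = sqnorm v) -> spec_norm A = 1.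
Proof.
move=> isoA; rewrite /spec_norm.
have vnormA v : vnorm (A *m v) = vnorm v by rewrite /vnorm -!/(sqnorm _) isoA.
have e1 : vnorm (delta_mx 0 0 : 'cV[R]_q.+1) = 1.
  rewrite /vnorm (bigD1 0) //= big1 => [|i /negbTE i0]; last by rewrite mxE i0 expr0n.
  by rewrite mxE !eqxx expr1n addr0 sqrtr1.
suff -> : [set vnorm (A *m v) | v in [set v | vnorm v = 1]] = [set 1] by rewrite sup1.
apply/seteqP; split => y /=; first by case=> v /= v1 <-; rewrite vnormA.
by move->; exists (delta_mx 0 0); rewrite /= ?vnormA.
Qed.

Lemma sum_sqr_orthonormal_rows n m (X : 'M[R]_(n, m)) (B : 'M[R]_n) :
  X *m X^T = 1%:M ->
  \sum_i \sum_j B i j ^+ 2 = spec_norm X^T ^+ 2 * \sum_i \sum_j (B *m X) i j ^+ 2.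
Proof.
case: n X B => [|n] X B XXt; first by rewrite !big_ord0 mulr0.
have isoXt v : sqnorm (X^T *m v) = sqnorm v.
  by rewrite !sqnorm_tr_mul trmx_mul trmxK mulmxA -(mulmxA _ X) XXt mulmx1.
rewrite spec_norm_isometry // expr1n mul1r; apply: eq_bigr => i _.
by rewrite -!sqnorm_row row_mul trmx_mul isoXt.
Qed.

Lemma det_repl_col n (A : 'M[R]_n) i v : A \in unitmx ->
  \det (repl_col A i v) = \det A * (invmx A *m v) i 0.
Proof.
move=> U; have detA : \det A != 0 by rewrite -unitfE -unitmxE.
rewrite (expand_det_col _ i) /invmx U -scalemxAl mxE mulrA mulfV // mul1r mxE.
apply: eq_bigr => r _; rewrite !mxE eqxx mulrC; congr (_ * _).
rewrite /cofactor; congr (_ * \det (row' r _)).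
by apply/matrixP => a b; rewrite !mxE eq_sym (negbTE (neq_lift i b)).
Qed.

Lemma sum_det_repl_col_sqr n m (A : 'M[R]_n) (X : 'M[R]_(n, m)) : A \in unitmx ->
  (\sum_j \sum_i \det (repl_col A i (col j X)) ^+ 2) / \det A ^+ 2 =
  \sum_i \sum_j (invmx A *m X) i j ^+ 2.
Proof.
move=> U; have detA : \det A != 0 by rewrite -unitfE -unitmxE.
rewrite [RHS]exchange_big mulr_suml; apply: eq_bigr => j _.
rewrite mulr_suml; apply: eq_bigr => i _.
rewrite det_repl_col // exprMn mulrAC mulfV ?expf_neq0 // mul1r.
by rewrite !mxE; congr (_ ^+ 2); apply: eq_bigr => k _; rewrite mxE.
Qed.

Lemma colsel_row' p q k (f : 'I_k -> 'I_q) (X : 'M[R]_(p, q)) i :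
  colsel f (row' i X) = row' i (colsel f X).
Proof. by apply/matrixP => r c; rewrite !mxE. Qed.

End RealMatrices.

Theorem lemma3p8 (R : realType) (n m : nat) (X : 'M[R]_(n, m)) :
  (n <= m)%N -> \rank X = n ->
  (forall (k : nat) (f : 'I_k -> 'I_m),
      {homo f : a b / (a < b)%N} -> (n <= k)%N ->
      \rank (colsel f X) = n ->
      frob_norm (pinv (colsel f X)) ^+ 2 =
        (\sum_(i < n) \det (colsel f (row' i X) *m (colsel f (row' i X))^T))
        / \det (colsel f X *m (colsel f X)^T))
  /\
  (forall f : 'I_n -> 'I_m,
      {homo f : a b / (a < b)%N} ->
      \rank (colsel f X) = n ->
      frob_norm (invmx (colsel f X)) ^+ 2 <=
        spec_norm (pinv X) ^+ 2 *
        ((\sum_(j < m) \sum_(i < n) \det (repl_col (colsel f X) i (col j X)) ^+ 2)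
         / \det (colsel f X) ^+ 2)
      /\
      (X *m X^T = 1%:M ->
       frob_norm (invmx (colsel f X)) ^+ 2 =
        spec_norm (pinv X) ^+ 2 *
        ((\sum_(j < m) \sum_(i < n) \det (repl_col (colsel f X) i (col j X)) ^+ 2)
         / \det (colsel f X) ^+ 2))).
Proof.
move=> _ rX; have fX : row_free X by apply/eqP.
split=> [k f _ _ rS | f _ rS].
  under eq_bigr => i _ do rewrite colsel_row'.
  by apply: frob_norm_pinv; apply/eqP.
have U : colsel f X \in unitmx by rewrite -row_free_unit; apply/eqP.
rewrite frob_norm_sqr sum_det_repl_col_sqr //; split.
  exact/sum_sqr_le_spec_norm_right_inverse/mulmx_pinv.
move=> XXt; rewrite pinv_row_free // XXt invmx1 mulmx1.
exact: sum_sqr_orthonormal_rows.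
Qed.
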